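(* Let $\mu$ be an infinite cardinal. Suppose there are abelian groups $\langle\mathbb G_X,\mathbb H^X:X\subseteq\mu\rangle$ such that for all $X,Y\subseteq\mu$, $\mathrm{Ext}(\mathbb G_Y,\mathbb H^X)=0\iff Y\subseteq X$. Then for every relation $R\subseteq\mu\times\mu$ there are families $\langle\mathbb G_\alpha:\alpha<\mu\rangle$ and $\langle\mathbb K_\alpha:\alpha<\mu\rangle$ of abelian groups such that for all $\alpha,\beta<\mu$, $\mathrm{Ext}(\mathbb G_\alpha,\mathbb K_\beta)=0\iff(\alpha,\beta)\in R$.
   Context: $\mathrm{Ext}=\mathrm{Ext}^1_{\mathbb Z}$. *)

From Stdlib Require List.
From HB Require Import structures.
From mathcomp Require Import all_boot all_algebra.
Set Implicit Arguments. Unset Strict Implicit. Unset Printing Implicit Defensive.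
Import GRing.Theory.
Local Open Scope ring_scope.

Definition is_hom (U V : zmodType) (f : U -> V) : Prop :=
  forall x y, f (x + y) = f x + f y.

(* Ext^1_Z(A, B) = 0, via the Yoneda description of Ext^1:
   every short exact sequence 0 -> B -i-> E -p-> A -> 0 of abelian groups splits,
   i.e. p has a homomorphic section. *)
Definition Ext_zero (A B : zmodType) : Prop :=
  forall (E : zmodType) (i : B -> E) (p : E -> A),
    is_hom i -> is_hom p -> injective i -> (forall a, exists e, p e = a) ->
    (forall e, p e = 0 <-> exists b, i b = e) ->
    exists s : A -> E, is_hom s /\ forall a, p (s a) = a.

Definition infinite_type (M : Type) : Prop :=
  forall l : list M, exists x, ~ List.In x l.

From mathcomp Require Import all_boot all_algebra.

(* Take [G_a := G_{a}] and [K_b := H^X] with [X = {a | R a b}]: then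
   [Ext(G_a, K_b) = 0] iff [{a} ⊆ X] iff [R a b]. *)

Section SingletonTest.

Variables (M : Type) (G H : (M -> Prop) -> zmodType).
Hypothesis hGH : forall X Y : M -> Prop,
  Ext_zero (G Y) (H X) <-> (forall a, Y a -> X a).

Lemma Ext_zero_singleton (X : M -> Prop) (a : M) :
  Ext_zero (G (eq^~ a)) (H X) <-> X a.
Proof. by rewrite hGH; split=> [/(_ a erefl) | Xa _ ->]. Qed.

End SingletonTest.

Theorem mainTheorem6 (M : Type) (hM : infinite_type M)
  (G : (M -> Prop) -> zmodType) (H : (M -> Prop) -> zmodType)
  (hGH : forall X Y : M -> Prop,
     Ext_zero (G Y) (H X) <-> (forall a, Y a -> X a)) :
  forall R : M -> M -> Prop,
    exists (Ga : M -> zmodType) (Ka : M -> zmodType),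
      forall a b : M, Ext_zero (Ga a) (Ka b) <-> R a b.
Proof.
move=> R; exists (fun a => G (eq^~ a)), (fun b => H (R^~ b)) => a b.
exact: Ext_zero_singleton.
Qed.
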